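(* Let $(C,\mathfrak p,\mathfrak d)$ be a regular $q$-cycle coalgebra. Then $\mathfrak d_{10}^1=\mathfrak p_{10}^1=1$ or $\mathfrak d_{11}^1=\mathfrak p_{11}^1=0$.
   Context: $K$ is an algebraically closed field of characteristic $0$ and $n\ge2$. $C$ is the coalgebra dual to $K[y]/\langle y^n\rangle$: basis $x_0,\dots,x_{n-1}$, $\Delta(x_i)=\sum_{j+k=i}x_j\otimes x_k$, $\epsilon(x_i)=\delta_{i0}$; $C\otimes C$ has the tensor product coalgebra structure; Sweedler notation $\Delta(b)=b_{(1)}\otimes b_{(2)}$. For linear maps $\mathfrak p,\mathfrak d\colon C\otimes C\to C$ write $a\cdot b=\mathfrak p(a\otimes b)$, $a:b=\mathfrak d(a\otimes b)$, $\mathfrak p(x_i\otimes x_j)=\sum_{k=0}^{n-1}\mathfrak p_{ij}^kx_k$, $\mathfrak d(x_i\otimes x_j)=\sum_{k=0}^{n-1}\mathfrak d_{ij}^kx_k$. A triple $(C,\mathfrak p,\mathfrak d)$ with $\mathfrak p,\mathfrak d$ coalgebra morphisms is a regular $q$-magma coalgebra if there are coalgebra morphisms $a\otimes b\mapsto a^b$, $a\otimes b\mapsto a_b$ from $C\otimes C$ to $C$ with $a^{b_{(1)}}\cdot b_{(2)}=(a\cdot b_{(1)})^{b_{(2)}}=\epsilon(b)a$ and $(a:b_{(2)})_{b_{(1)}}=a_{b_{(2)}}:b_{(1)}=\epsilon(b)a$. It is a regular $q$-cycle coalgebra if moreover for all $a,b,c$: (1) $(a\cdot b_{(1)})\cdot(c:b_{(2)})=(a\cdot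 c_{(2)})\cdot(b\cdot c_{(1)})$; (2) $(a\cdot b_{(1)}):(c\cdot b_{(2)})=(a:c_{(2)})\cdot(b:c_{(1)})$; (3) $(a:b_{(1)}):(c:b_{(2)})=(a:c_{(2)}):(b\cdot c_{(1)})$. *)

From HB Require Import structures.
From mathcomp Require Import all_boot all_order all_algebra.
Set Implicit Arguments. Unset Strict Implicit. Unset Printing Implicit Defensive.
Import GRing.Theory.
Local Open Scope ring_scope.

(* C = dual coalgebra of K[y]/(y^n): elements are row vectors 'rV[K]_n of
   coordinates in the basis x_0,...,x_{n-1}.  A linear map C (x) C -> C is
   given by its structure constants f i j k = f_{ij}^k. *)
Section QCycle.
Variables (K : fieldType) (n : nat).

Definition sconst := 'I_n -> 'I_n -> 'I_n -> K.

Definition bas (i : 'I_n) : 'rV[K]_n := \row_k (i == k)%:R.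

(* coordinate of v at x_m (0 if m >= n) *)
Definition coef (v : 'rV[K]_n) (m : nat) : K := \sum_(k < n | val k == m) v 0 k.

Definition counit (v : 'rV[K]_n) : K := coef v 0.

Definition bilin (f : sconst) (a b : 'rV[K]_n) : 'rV[K]_n :=
  \row_k \sum_(i < n) \sum_(j < n) a 0 i * b 0 j * f i j k.

Definition fc (f : sconst) (i j : 'I_n) (m : nat) : K :=
  \sum_(t < n | val t == m) f i j t.

(* Sweedler sum  E(b_(1), b_(2))  for E bilinear:
   Delta(b) = sum_{i+j<n} b_{i+j} x_i (x) x_j *)
Definition sweedler (b : 'rV[K]_n) (E : 'rV[K]_n -> 'rV[K]_n -> 'rV[K]_n)
  : 'rV[K]_n :=
  \sum_(i < n) \sum_(j < n) coef b (i + j) *: E (bas i) (bas j).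

(* f : C (x) C -> C is a coalgebra morphism (C (x) C with the tensor product
   coalgebra structure), written on the basis x_i (x) x_j:
   Delta(f(x_i (x) x_j)) = (f (x) f)(Delta(x_i (x) x_j)) and
   eps(f(x_i (x) x_j)) = eps(x_i) eps(x_j). *)
Definition coalg_mor (f : sconst) : Prop :=
  (forall i j k l : 'I_n,
     fc f i j (k + l) =
     \sum_(a < n) \sum_(b < n) \sum_(c < n) \sum_(d < n)
        (if ((a + b == i) && (c + d == j))%N then f a c k * f b d l else 0))
  /\ (forall i j : 'I_n, fc f i j 0 = ((val i == 0%N) && (val j == 0%N))%:R).

(* regular q-magma coalgebra (C, p, d); u is a (x) b |-> a^b, l is a (x) b |-> a_b *)
Definition regular_qmagma (p d : sconst) : Prop :=
  coalg_mor p /\ coalg_mor d /\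
  exists u l : sconst, coalg_mor u /\ coalg_mor l /\
   forall a b : 'rV[K]_n,
    [/\ sweedler b (fun b1 b2 => bilin p (bilin u a b1) b2) = counit b *: a,
        sweedler b (fun b1 b2 => bilin u (bilin p a b1) b2) = counit b *: a,
        sweedler b (fun b1 b2 => bilin l (bilin d a b2) b1) = counit b *: a &
        sweedler b (fun b1 b2 => bilin d (bilin l a b2) b1) = counit b *: a].

Definition regular_qcycle (p d : sconst) : Prop :=
  regular_qmagma p d /\
  forall a b c : 'rV[K]_n,
  [/\ sweedler b (fun b1 b2 => bilin p (bilin p a b1) (bilin d c b2)) =
      sweedler c (fun c1 c2 => bilin p (bilin p a c2) (bilin p b c1)),
      sweedler b (fun b1 b2 => bilin d (bilin p a b1) (bilin p c b2)) =
      sweedler c (fun c1 c2 => bilin p (bilin d a c2) (bilin d b c1)) &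
      sweedler b (fun b1 b2 => bilin d (bilin d a b1) (bilin d c b2)) =
      sweedler c (fun c1 c2 => bilin d (bilin d a c2) (bilin p b c1))].

End QCycle.

(* Write alpha_f = f_{10}^1, beta_f = f_{01}^1 and gamma_f = f_{11}^1.  For a coalgebra
   morphism f the structure constants satisfy f_{ij}^0 = delta_{i0} delta_{j0} and
   f_{ij}^{k+l} = sum f_{ac}^k f_{i-a,j-c}^l.  Hence f_{00}^1 is nilpotent, so zero,
   f_{ij}^m = 0 whenever i + j < m, and f_{i1}^{i+1} = (i+1) alpha^i beta; at i = n-1
   the left side is 0 (there is no x_n), so beta = 0 in characteristic 0 as soon as
   alpha <> 0.  Then f sends x0(x)x0, x1(x)x0, x0(x)x1, x1(x)x1 to x0, alpha x1, 0,
   gamma x1.  Regularity at a = x1, b = x0 gives alpha_u alpha_p = 1 = alpha_d alpha_l,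
   and the cycle identities (1) and (3) at (x1,x1,x0) and (x1,x0,x1) give
   alpha_f gamma_f (alpha_p - 1) = alpha_f gamma_f (alpha_d - 1) = 0 for f = p, d. *)

From HB Require Import structures.
From mathcomp Require Import all_boot all_order all_algebra.
From mathcomp Require Import ring zify.
Import GRing.Theory.
Local Open Scope ring_scope.
Set Implicit Arguments. Unset Strict Implicit. Unset Printing Implicit Defensive.

Lemma sum_ord_addn_eq (V : nmodType) (n a i : nat) (G : nat -> V) : (i < n)%N ->
  \sum_(b < n) (if (a + b == i)%N then G b else 0) = if (a <= i)%N then G (i - a)%N else 0.
Proof.
move=> lt_in; rewrite -big_mkcond /=; case: leqP => [le_ai|lt_ia].
- have lt_ian : (i - a < n)%N by lia.
  by rewrite (big_pred1 (Ordinal lt_ian)) // => b; rewrite /= -val_eqE /=; apply/eqP/eqP; lia.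
- by rewrite big_pred0 // => b; apply/negbTE/eqP; lia.
Qed.

Section StructureConstants.
Variables (K : fieldType) (n : nat) (f : sconst K n).

(* The structure constants extended by zero to all natural indices, so that index
   arithmetic such as i - a can be done in nat. *)
Definition sconstN (i j m : nat) : K :=
  if insub i is Some a then if insub j is Some b then if insub m is Some c then
    f a b c else 0 else 0 else 0.

Local Notation F := sconstN.

Lemma sconstN_ord (a b c : 'I_n) : F a b c = f a b c.
Proof. by rewrite /F !valK. Qed.

Lemma sconstN_out i j m : [|| (n <= i)%N, (n <= j)%N | (n <= m)%N] -> F i j m = 0.
Proof.
by rewrite /F; do 3 case: insubP => [? ? _|//]; lia.
Qed.

Lemma fc_sconstN (a b : 'I_n) m : fc f a b m = F a b m.
Proof.
rewrite /fc; case: (ltnP m n) => [lt_mn|le_nm].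
- by rewrite (big_pred1 (Ordinal lt_mn)) => [|t]; [rewrite -sconstN_ord|rewrite /= -val_eqE].
- rewrite sconstN_out ?le_nm ?orbT // big_pred0 // => t.
  by rewrite ltn_eqF // (leq_trans (ltn_ord t)).
Qed.

Hypothesis f_mor : coalg_mor f.

Lemma sconstN_counit i j : (i < n)%N -> (j < n)%N ->
  F i j 0 = ((i == 0%N) && (j == 0%N))%:R.
Proof. by move=> lt_in lt_jn; rewrite -(fc_sconstN (Ordinal lt_in) (Ordinal lt_jn)) f_mor.2. Qed.

Lemma sconstN_comul i j k l : (i < n)%N -> (j < n)%N -> (k < n)%N -> (l < n)%N ->
  F i j (k + l) = \sum_(a < i.+1) \sum_(c < j.+1) F a c k * F (i - a) (j - c) l.
Proof.
move=> lt_in lt_jn lt_kn lt_ln.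
rewrite -(fc_sconstN (Ordinal lt_in) (Ordinal lt_jn)).
rewrite (f_mor.1 _ _ (Ordinal lt_kn) (Ordinal lt_ln)) /=.
rewrite (big_ord_widen n (fun a => \sum_(c < j.+1) F a c k * F (i - a) (j - c) l) lt_in).
rewrite [RHS]big_mkcond /=; apply: eq_bigr => a _; rewrite exchange_big /= ltnS.
case: leqP => [le_ai|lt_ia]; last first.
  by do 3 (rewrite big1 // => ? _); rewrite gtn_eqF ?ltn_addr.
rewrite (big_ord_widen n (fun c => F a c k * F (i - a) (j - c) l) lt_jn).
rewrite [RHS]big_mkcond /=; apply: eq_bigr => c _; rewrite ltnS.
transitivity (\sum_(b < n) if (a + b == i)%N then
  \sum_(d < n) (if (c + d == j)%N then F a c k * F b d l else 0) else 0).
  apply: eq_bigr => b _; case: eqP => _ /=; last by rewrite big1.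
  by apply: eq_bigr => d _; rewrite -!sconstN_ord.
rewrite (sum_ord_addn_eq _
  (fun b => \sum_(d < n) (if (c + d == j)%N then F a c k * F b d l else 0))) // le_ai.
by rewrite (sum_ord_addn_eq _ (fun d => F a c k * F (i - a) d l)).
Qed.

Lemma sconstN00_1 : F 0 0 1 = 0.
Proof.
case: (leqP n 1) => [le_n1|lt_1n]; first by rewrite sconstN_out ?le_n1 ?orbT.
have lt_0n : (0 < n)%N by apply: ltnW.
have pow m : (m < n)%N -> F 0 0 m = F 0 0 1 ^+ m.
  elim: m => [|m IHm] lt_mn; first by rewrite sconstN_counit.
  have lt_m : (m < n)%N by apply: ltnW.
  by rewrite exprSr -IHm // -addn1 sconstN_comul // !big_ord1.
have lt_pn : (n.-1 < n)%N by rewrite ltn_predL.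
have := sconstN_comul lt_0n lt_0n lt_pn lt_1n.
rewrite addn1 prednK // (sconstN_out (i := 0) (j := 0) (m := n)) ?leqnn ?orbT //.
rewrite !big_ord1 /= pow // -exprSr prednK // => /esym/eqP.
by rewrite expf_eq0 => /andP[_ /eqP].
Qed.

Lemma sconstN_lt i j m : (i + j < m)%N -> F i j m = 0.
Proof.
elim: m i j => [//|m IHm] i j lt_ijm.
case: (ltnP m.+1 n) => [lt_mn|le_nm]; last by rewrite sconstN_out ?le_nm ?orbT.
have [lt_in lt_jn lt_m lt_1n] : [/\ (i < n)%N, (j < n)%N, (m < n)%N & (1 < n)%N] by split; lia.
rewrite -addn1 sconstN_comul //; apply: big1 => a _; apply: big1 => c _.
case: (ltnP (a + c) m) => [lt_acm|le_mac]; first by rewrite IHm ?mul0r.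
have [-> ->] : (i - a = 0)%N /\ (j - c = 0)%N by have := ltn_ord a; have := ltn_ord c; lia.
by rewrite sconstN00_1 mulr0.
Qed.

Lemma sconstN_diag0 i : (i < n)%N -> F i 0 i = F 1 0 1 ^+ i.
Proof.
elim: i => [|i IHi] lt_in; first by rewrite sconstN_counit.
have [lt_i lt_0n lt_1n] : [/\ (i < n)%N, (0 < n)%N & (1 < n)%N] by split; lia.
rewrite -[X in F _ _ X]addn1 sconstN_comul //; under eq_bigr do rewrite big_ord1 /=.
rewrite !big_ord_recr /= big1 => [|a _]; last by rewrite sconstN_lt ?mul0r // addn0.
by rewrite add0r subSnn !subnn sconstN00_1 mulr0 addr0 IHi // exprSr.
Qed.

Lemma sconstN_diag1 i : (i < n)%N -> F i 1 i.+1 = i.+1%:R * F 1 0 1 ^+ i * F 0 1 1.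
Proof.
elim: i => [|i IHi] lt_in; first by rewrite expr0 mulr1 mul1r.
have [lt_i lt_1n] : (i < n)%N /\ (1 < n)%N by split; lia.
rewrite -[X in F _ _ X]addn1 sconstN_comul //.
under eq_bigr do rewrite !big_ord_recr big_ord0 /= add0r.
rewrite !big_ord_recr /= big1 => [|a _]; last first.
  have lt_ai := ltn_ord a.
  by rewrite !(sconstN_lt (i := a)) ?mul0r ?addr0 //; lia.
rewrite add0r subSnn !subnn subn0 (sconstN_lt (i := i) (j := 0)) ?addn0 //.
rewrite sconstN00_1 IHi // (sconstN_diag0 lt_in).
by rewrite !exprS; ring.
Qed.

Lemma sconstN01_1_eq0 : [pchar K] =i pred0 -> F 1 0 1 != 0 -> F 0 1 1 = 0.
Proof.
move=> /pcharf0P char0 alpha_neq0.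
case: (posnP n) => [n0|lt_0n]; first by rewrite sconstN_out // n0.
have := @sconstN_diag1 n.-1; rewrite prednK // => /(_ (leqnn n)).
rewrite sconstN_out ?leqnn ?orbT // => /esym/eqP.
rewrite !mulf_eq0 expf_eq0 (negbTE alpha_neq0) char0 andbF orbF eqn0Ngt lt_0n.
by move/eqP.
Qed.

Lemma sconstN11_2 : F 0 1 1 = 0 -> F 1 1 2 = 0.
Proof.
move=> beta0; case: (leqP n 2) => [le_n2|lt_2n]; first by rewrite sconstN_out ?le_n2 ?orbT.
have lt_1n : (1 < n)%N by apply: ltnW.
rewrite -[2%N]/(1 + 1)%N sconstN_comul // !big_ord_recr !big_ord0 /=.
by rewrite beta0 sconstN00_1 !(mulr0, mul0r, add0r).
Qed.
End StructureConstants.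

Section LowDegree.
Variables (K : fieldType) (n : nat) (i0 i1 : 'I_n).
Hypotheses (i0_val : nat_of_ord i0 = 0%N) (i1_val : nat_of_ord i1 = 1%N).

Local Notation x0 := (bas K i0).
Local Notation x1 := (bas K i1).

Lemma bilinZl (f : sconst K n) c a b : bilin f (c *: a) b = c *: bilin f a b.
Proof.
apply/rowP => k; rewrite !mxE mulr_sumr; apply: eq_bigr => i _.
by rewrite mulr_sumr; apply: eq_bigr => j _; rewrite !mxE -!mulrA.
Qed.

Lemma bilinZr (f : sconst K n) c a b : bilin f a (c *: b) = c *: bilin f a b.
Proof.
apply/rowP => k; rewrite !mxE mulr_sumr; apply: eq_bigr => i _.
by rewrite mulr_sumr; apply: eq_bigr => j _; rewrite !mxE mulrCA -!mulrA.
Qed.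

Lemma bilin_bas (f : sconst K n) i j : bilin f (bas K i) (bas K j) = \row_k f i j k.
Proof.
apply/rowP => k; rewrite /bas !mxE; under eq_bigr do under eq_bigr do rewrite !mxE.
rewrite (bigD1 i) //= (bigD1 j) //= !eqxx !mul1r.
rewrite big1 => [|t ne_tj]; last by rewrite eq_sym (negbTE ne_tj) mulr0 mul0r.
rewrite big1 ?addr0 // => s ne_si.
by rewrite big1 // => t _; rewrite eq_sym (negbTE ne_si) !mul0r.
Qed.

Lemma coef_bas (i : 'I_n) m : coef (bas K i) m = (i == m :> nat)%:R.
Proof.
rewrite /coef big_mkcond (bigD1 i) //= big1 => [|k ne_ki]; last first.
  by rewrite /bas mxE (eq_sym i) (negbTE ne_ki); case: ifP.
by rewrite /bas mxE eqxx addr0; case: eqP.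
Qed.

Lemma counit_bas0 : counit x0 = 1.
Proof. by rewrite /counit coef_bas i0_val. Qed.

Lemma sum_ord_dirac (V : lmodType K) (m : 'I_n) (G : 'I_n -> V) :
  \sum_(j < n) (j == m)%:R *: G j = G m.
Proof.
rewrite (bigD1 m) //= eqxx scale1r big1 ?addr0 // => j ne_jm.
by rewrite (negbTE ne_jm) scale0r.
Qed.

Lemma i0_eq_i1F : (i0 == i1) = false.
Proof. by rewrite -val_eqE /= i0_val i1_val. Qed.

Lemma sweedler_bas0 E : sweedler x0 E = E x0 x0.
Proof.
have idx (i j : 'I_n) : (i0 == i + j :> nat)%N = (i == i0) && (j == i0).
  by rewrite -!val_eqE /= i0_val; lia.
rewrite /sweedler; under eq_bigr do under eq_bigr do rewrite coef_bas idx.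
rewrite (bigD1 i0) //= [\sum_(i < n | i != i0) _]big1 ?addr0 => [|i ne_i0]; last first.
  by rewrite big1 // => j _; rewrite (negbTE ne_i0) scale0r.
by under eq_bigr do rewrite eqxx; rewrite sum_ord_dirac.
Qed.

Lemma sweedler_bas1 E : sweedler x1 E = E x0 x1 + E x1 x0.
Proof.
have idx (i j : 'I_n) :
    (i1 == i + j :> nat)%N = ((i == i0) && (j == i1)) || ((i == i1) && (j == i0)).
  by rewrite -!val_eqE /= i0_val i1_val; lia.
rewrite /sweedler; under eq_bigr do under eq_bigr do rewrite coef_bas idx.
have ne_i1i0 : i1 != i0 by rewrite eq_sym i0_eq_i1F.
rewrite (bigD1 i0) //= [\sum_(i < n | i != i0) _](bigD1 i1) //=.
rewrite [\sum_(i < n | (i != i0) && (i != i1)) _]big1 ?addr0 => [|i]; last first.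
  case/andP=> /negbTE ne_i0 /negbTE ne_i1.
  by rewrite big1 // => j _; rewrite ne_i0 ne_i1 scale0r.
rewrite !eqxx i0_eq_i1F (negbTE ne_i1i0) /=.
by under eq_bigr do rewrite orbF; rewrite !sum_ord_dirac.
Qed.

Section CoalgebraMorphism.
Variable f : sconst K n.
Hypothesis f_mor : coalg_mor f.

Lemma bilin_bas00 : bilin f x0 x0 = x0.
Proof.
apply/rowP => k; rewrite bilin_bas /bas !mxE -(sconstN_ord f) -val_eqE /= i0_val.
case: k => [[|k] lt_kn] /=; first by rewrite (sconstN_counit f_mor).
by rewrite (sconstN_lt f_mor).
Qed.

Lemma bilin_bas_deg1 (i j : 'I_n) :
  (i + j = 1)%N -> bilin f (bas K i) (bas K j) = f i j i1 *: x1.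
Proof.
move=> ij1; apply/rowP => k; rewrite bilin_bas /bas !mxE -!(sconstN_ord f) -val_eqE /= i1_val.
case: k => [[|[|k]] lt_kn] /=; last by rewrite (sconstN_lt f_mor) ?ij1 // mulr0.
- have ij0 : (i == 0 :> nat) && (j == 0 :> nat) = false by lia.
  by rewrite (sconstN_counit f_mor) // ij0 mulr0.
- by rewrite mulr1.
Qed.

Lemma bilin_bas10 : bilin f x1 x0 = f i1 i0 i1 *: x1.
Proof. by rewrite bilin_bas_deg1 // i0_val i1_val. Qed.

Lemma bilin_bas01 : bilin f x0 x1 = f i0 i1 i1 *: x1.
Proof. by rewrite bilin_bas_deg1 // i0_val i1_val. Qed.

Lemma sconst01_1_eq0 : [pchar K] =i pred0 -> f i1 i0 i1 != 0 -> f i0 i1 i1 = 0.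
Proof. by rewrite -!(sconstN_ord f) i0_val i1_val; apply: sconstN01_1_eq0. Qed.

Lemma bilin_bas11 : f i0 i1 i1 = 0 -> bilin f x1 x1 = f i1 i1 i1 *: x1.
Proof.
rewrite -(sconstN_ord f) i0_val i1_val => beta0.
apply/rowP => k; rewrite bilin_bas /bas !mxE -!(sconstN_ord f) -val_eqE /= i1_val.
case: k => [[|[|[|k]]] lt_kn] /=.
- by rewrite (sconstN_counit f_mor) ?mulr0 // -[X in (X < n)%N]i1_val.
- by rewrite mulr1.
- by rewrite (sconstN11_2 f_mor) // mulr0.
- by rewrite (sconstN_lt f_mor) // mulr0.
Qed.
End CoalgebraMorphism.

Lemma scale_bas1_inj (a b : K) : a *: x1 = b *: x1 -> a = b.
Proof. by move/rowP/(_ i1); rewrite /bas !mxE eqxx !mulr1. Qed.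

Lemma alpha_mul_eq1 (f g : sconst K n) : coalg_mor f -> coalg_mor g ->
  bilin g (bilin f x1 x0) x0 = x1 -> f i1 i0 i1 * g i1 i0 i1 = 1.
Proof.
move=> f_mor g_mor; rewrite bilin_bas10 // bilinZl bilin_bas10 // scalerA.
by rewrite -[in RHS](scale1r x1) => /scale_bas1_inj.
Qed.

Lemma regular_qmagma_alpha_neq0 (p d : sconst K n) :
  regular_qmagma p d -> p i1 i0 i1 != 0 /\ d i1 i0 i1 != 0.
Proof.
case=> p_mor [d_mor [u [l [u_mor [l_mor reg]]]]].
have [up _ ld _] := reg x1 x0; move: up ld.
rewrite !sweedler_bas0 counit_bas0 !scale1r.
move=> /(alpha_mul_eq1 u_mor p_mor) up /(alpha_mul_eq1 d_mor l_mor) dl.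
split; apply/eqP => alpha0; [move: up | move: dl]; rewrite alpha0 ?mulr0 ?mul0r.
- by move/eqP; rewrite eq_sym oner_eq0.
- by move/eqP; rewrite eq_sym oner_eq0.
Qed.

Lemma qcycle_identity_eqs (f g h : sconst K n) :
  coalg_mor f -> coalg_mor g -> coalg_mor h ->
  f i0 i1 i1 = 0 -> g i0 i1 i1 = 0 -> h i0 i1 i1 = 0 ->
  (forall a b c : 'rV[K]_n,
     sweedler b (fun b1 b2 => bilin f (bilin f a b1) (bilin g c b2)) =
     sweedler c (fun c1 c2 => bilin f (bilin f a c2) (bilin h b c1))) ->
  f i1 i0 i1 * f i1 i1 i1 * (h i1 i0 i1 - 1) = 0 /\
  f i1 i0 i1 * f i1 i1 i1 * (g i1 i0 i1 - 1) = 0.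
Proof.
move=> f_mor g_mor h_mor f01 g01 h01 cyc.
have := cyc x1 x1 x0; have := cyc x1 x0 x1.
rewrite !(sweedler_bas0, sweedler_bas1).
rewrite ?(bilin_bas00 g_mor, bilin_bas00 h_mor, bilin_bas10 f_mor, bilin_bas10 g_mor).
rewrite ?(bilin_bas10 h_mor, bilin_bas01 g_mor, bilin_bas01 h_mor, bilin_bas11 f_mor f01).
rewrite ?(bilinZl, bilinZr, bilin_bas00 f_mor, bilin_bas10 f_mor, bilin_bas11 f_mor f01).
rewrite g01 h01 !scale0r ?(scaler0, add0r, addr0) !scalerA.
move=> /scale_bas1_inj eg /scale_bas1_inj eh.
split; apply/eqP; rewrite mulrBr mulr1 subr_eq0; apply/eqP.
- by rewrite [RHS]mulrC eh mulrAC.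
- by rewrite mulrAC eg mulrC.
Qed.
End LowDegree.

Lemma alpha1_or_gamma0 (K : fieldType) (ap ad gp gd : K) : ap != 0 -> ad != 0 ->
  ap * gp * (ap - 1) = 0 -> ap * gp * (ad - 1) = 0 ->
  ad * gd * (ap - 1) = 0 -> ad * gd * (ad - 1) = 0 ->
  (ad = 1 /\ ap = 1) \/ (gd = 0 /\ gp = 0).
Proof.
move=> /negbTE ap_neq0 /negbTE ad_neq0 /eqP epp /eqP epd /eqP edp /eqP edd.
move: epp epd edp edd; rewrite -!mulrA !mulf_eq0 ap_neq0 ad_neq0 !subr_eq0 /=.
case: (eqVneq ap 1) => [->|_]; last by rewrite !orbF => /eqP gp0 _ /eqP gd0 _; right.
case: (eqVneq ad 1) => [->|_]; first by left.
by rewrite !orbF => _ /eqP gp0 _ /eqP gd0; right.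
Qed.

Theorem proposition2p2 (K : closedFieldType) (n : nat)
  (p d : 'I_n -> 'I_n -> 'I_n -> K) :
  [pchar K] =i pred0 -> (1 < n)%N -> regular_qcycle p d ->
  forall i0 i1 : 'I_n, val i0 = 0%N -> val i1 = 1%N ->
  (d i1 i0 i1 = 1 /\ p i1 i0 i1 = 1) \/ (d i1 i1 i1 = 0 /\ p i1 i1 i1 = 0).
Proof.
move=> char0 _ [qmagma cyc] i0 i1 i0_val i1_val.
have [p_mor [d_mor _]] := qmagma.
have [p10 d10] := regular_qmagma_alpha_neq0 i0_val i1_val qmagma.
have p01 := sconst01_1_eq0 i0_val i1_val p_mor char0 p10.
have d01 := sconst01_1_eq0 i0_val i1_val d_mor char0 d10.
have [epp epd] := qcycle_identity_eqs i0_val i1_val p_mor d_mor p_mor p01 d01 p01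
  (fun a b c => let: And3 e _ _ := cyc a b c in e).
have [edp edd] := qcycle_identity_eqs i0_val i1_val d_mor d_mor p_mor d01 d01 p01
  (fun a b c => let: And3 _ _ e := cyc a b c in e).
exact: alpha1_or_gamma0 p10 d10 epp epd edp edd.
Qed.
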